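(* Let $n>2$, $V=\mathbb{F}_2^n$ with canonical basis $e_1,\dots,e_n$, and let $W=\langle e_3,\dots,e_n\rangle$. For $b\in W\setminus\{0\}$ define $\pi_b,\varepsilon_b\in\mathrm{Sym}(V)$ by $$x\pi_b=x+x^{(2)}b+e_1,\qquad x\varepsilon_b=x+x^{(1)}b+e_2,$$ and let $T_b=\langle \pi_b,\varepsilon_b,\sigma_{e_i}\mid 3\le i\le n\rangle$. Then the elementary abelian regular subgroups $R$ of $\mathrm{Sym}(V)$ with $T\cap R=\sigma_W$ are exactly the groups $T_b$, $b\in W\setminus\{0\}$, and these are pairwise distinct; in particular there are exactly $2^{n-2}-1$ of them.
   Context: For $v\in V$, $v^{(i)}\in\mathbb{F}_2$ is its $i$-th coordinate. $T=\{\sigma_v:v\in V\}$ with $\sigma_v:x\mapsto x+v$; $\sigma_W=\{\sigma_w:w\in W\}$. Permutations act on the right. *)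

From HB Require Import structures.
From mathcomp Require Import all_boot all_order all_algebra all_fingroup all_solvable.
Set Implicit Arguments. Unset Strict Implicit. Unset Printing Implicit Defensive.
Import GRing.Theory.
Local Open Scope ring_scope.

Notation V n := 'rV['F_2]_n.

(* x^{(k)} : the k-th coordinate, 1-indexed as in the paper (0 if out of range) *)
Definition coord {n} (x : V n) (k : nat) : 'F_2 :=
  match k with
  | 0 => 0
  | k'.+1 => if (insub k' : option 'I_n) is Some j then x 0 j else 0
  end.

(* e_k : the k-th canonical basis vector, 1-indexed *)
Definition evec n (k : nat) : V n := \row_(j < n) ((j.+1 == k)%N)%:R.

(* W = <e_3, ..., e_n> : the span of the basis vectors e_3..e_n, i.e.
   the vectors whose first two coordinates vanish. *)
Definition Wset n : {set V n} := [set w : V n | (coord w 1 == 0) && (coord w 2 == 0)].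

(* a permutation from a function; the identity if the function is not injective
   (never used in that case) *)
Definition mkperm {T : finType} (f : T -> T) : {perm T} :=
  insubd (1%g : {perm T}) [ffun x => f x].

Definition transl n (v : V n) : {perm V n} := perm (addIr v).

Definition Tgrp n : {set {perm V n}} := [set transl v | v : V n].
Definition sigmaW n : {set {perm V n}} := [set transl w | w in Wset n].

Definition pi_ n (b : V n) : {perm V n} :=
  mkperm (fun x : V n => x + coord x 2 *: b + evec n 1).
Definition eps_ n (b : V n) : {perm V n} :=
  mkperm (fun x : V n => x + coord x 1 *: b + evec n 2).

Definition T_ n (b : V n) : {set {perm V n}} :=
  <<[set pi_ b; eps_ b] :|: [set transl (evec n i.+1) | i : 'I_n & (2 <= i)%N]>>%g.

Definition regular n (R : {set {perm V n}}) : bool :=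
  [transitive R, on [set: V n] | 'P] && [forall x : V n, ('C_R[x | 'P] == 1)%g].

From Pilot Require Import Defs.
From HB Require Import structures.
From mathcomp Require Import all_boot all_order all_algebra all_fingroup all_solvable.
From mathcomp Require Import zify.
Import Pilot.Defs.
Set Implicit Arguments. Unset Strict Implicit. Unset Printing Implicit Defensive.
Import GRing.Theory.
Local Open Scope ring_scope.

(* Elementary abelian regular subgroups R of Sym(V), V = F_2^n, with T :&: R = sigma_W.
   Permutations act on the right; x g is written g x below.

   For b in W the twisted translations  tau_b(v) : x |-> x + v + c(v, x) b,
   c(v, x) = v1 x2 + v2 x1 + v1 v2, satisfy tau_b(u) tau_b(v) = tau_b(u + v), so
   v |-> tau_b(v) is a homomorphism from (V, +) into Sym(V).  Since pi_b = tau_b(e1),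
   eps_b = tau_b(e2) and sigma_w = tau_b(w) for w in W, its image is T_b.  Hence T_b
   is elementary abelian, transitive with at most #|V| elements (so regular), and
   for b <> 0 its translations are exactly sigma_W.

   Conversely, let R be elementary abelian and regular with T :&: R = sigma_W.  Its
   elements are involutions commuting with sigma_W, i.e. W-equivariant maps, which
   are determined by their values on the transversal {0, e1, e2, e1 + e2} of W.
   Choose r1, r2 in R with 0 r1 = e1, 0 r2 = e2 and put b := e2 r1 + e1 + e2.
   Regularity forces b in W \ 0, and comparing values on the transversal gives
   r1 = pi_b and r2 = eps_b; thus T_b <= R, with equality by counting.
   Finally b |-> T_b is injective (pi_b and pi_c agree at 0 and both lie in the
   regular group T_c) and #|W| = 2^(n-2). *)

Lemma F2_cases (c : 'F_2) : c = 0 \/ c = 1.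
Proof. by case: c => [[|[|m]] Hm]; [left|right|]; try apply/val_inj. Qed.

(* Decides an equation over F_2 by enumerating the values of its atoms (variables,
   matrix entries, coordinates, boolean casts); equational premises are allowed. *)
Ltac f2_decide :=
  repeat match goal with
  | c : 'F_2 |- _ => case: (F2_cases c) => ?; subst c
  | |- context [@fun_of_matrix _ _ _ ?A ?i ?k] =>
      let c := fresh in set c := @fun_of_matrix _ _ _ A i k;
      case: (F2_cases c) => ->; clear c
  | |- context [coord ?x ?k] => case: (F2_cases (coord x k)) => ->
  | |- context [nat_of_bool ?c] =>
      lazymatch c with true => fail | false => fail | _ => case: c end
  end; by do ?move=> /eqP ?; apply/eqP.

Lemma addvv n (v : V n) : v + v = 0.
Proof. by apply/rowP => j; rewrite !mxE; f2_decide. Qed.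

Section Coordinates.
Variable n : nat.
Local Notation e1 := (evec n 1).
Local Notation e2 := (evec n 2).
Local Notation W := (Wset n).

Lemma coordD (x y : V n) k : coord (x + y) k = coord x k + coord y k.
Proof.
case: k => [|k]; rewrite /coord ?addr0 //.
by case: insubP => [j _ _|_]; rewrite ?mxE ?addr0.
Qed.

Lemma coordZ (a : 'F_2) (x : V n) k : coord (a *: x) k = a * coord x k.
Proof.
case: k => [|k]; rewrite /coord ?mulr0 //.
by case: insubP => [j _ _|_]; rewrite ?mxE ?mulr0.
Qed.

Lemma coord0 k : coord (0 : V n) k = 0.
Proof. by rewrite -(scale0r (0 : V n)) coordZ mul0r. Qed.

Lemma coord_ord (x : V n) (j : 'I_n) : coord x j.+1 = x 0 j.
Proof.
rewrite /coord; case: insubP => [j' _ hj|]; last by rewrite ltn_ord.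
by congr (x 0 _); apply: val_inj.
Qed.

Lemma coord_evec i k : (i <= n)%N -> coord (evec n i) k = ((i == k) && (0 < k)%N)%:R.
Proof.
move=> hi; case: k => [|k]; rewrite /coord ?andbF //.
case: insubP => [j _ <-|/negP hk]; first by rewrite mxE eq_sym andbT.
by rewrite andbT; case: eqP => // ik; case: hk; lia.
Qed.

Lemma WsetP (w : V n) : reflect (coord w 1 = 0 /\ coord w 2 = 0) (w \in W).
Proof. by rewrite inE; apply: (iffP andP) => [[/eqP ? /eqP ?]|[-> ->]]. Qed.

Lemma Wset0 : 0 \in W.
Proof. by apply/WsetP; rewrite !coord0. Qed.

Lemma evec_Wset (j : 'I_n) : (2 <= j)%N -> evec n j.+1 \in W.
Proof.
move=> hj; have [j1 j2] : (j.+1 == 1)%N = false /\ (j.+1 == 2)%N = false by lia.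
by apply/WsetP; rewrite !coord_evec // j1 j2.
Qed.

Lemma evec_decomp (v : V n) : v = \sum_(j < n) v 0 j *: evec n j.+1.
Proof.
apply/rowP => k; rewrite summxE (bigD1 k) //= big1 => [|i ik]; rewrite !mxE.
  by rewrite eqxx mulr1 addr0.
by rewrite eqSS (_ : (k == i :> nat) = false) ?mulr0 //; apply/negbTE; rewrite eq_sym.
Qed.

Hypothesis hn : (2 < n)%N.

Lemma coord_e11 : coord e1 1 = 1. Proof. by rewrite coord_evec //; lia. Qed.
Lemma coord_e12 : coord e1 2 = 0. Proof. by rewrite coord_evec //; lia. Qed.
Lemma coord_e21 : coord e2 1 = 0. Proof. by rewrite coord_evec //; lia. Qed.
Lemma coord_e22 : coord e2 2 = 1. Proof. by rewrite coord_evec //; lia. Qed.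
Definition coord_e := (coord_e11, coord_e12, coord_e21, coord_e22).

Lemma Wset_proj (x : V n) : x + (coord x 1 *: e1 + coord x 2 *: e2) \in W.
Proof. by apply/WsetP; rewrite !(coordD, coordZ, coord_e); split; f2_decide. Qed.

Lemma e1_notin_W : e1 \notin W.
Proof. by apply/WsetP; rewrite coord_e11 => -[/eqP]. Qed.

Lemma e2_notin_W : e2 \notin W.
Proof. by apply/WsetP; rewrite coord_e22 => -[_ /eqP]. Qed.

End Coordinates.

Definition W_equivariant n (f : V n -> V n) :=
  forall x w, w \in Wset n -> f (x + w) = f x + w.

Section EquivariantMaps.
Variable n : nat.
Hypothesis hn : (2 < n)%N.
Local Notation e1 := (evec n 1).
Local Notation e2 := (evec n 2).
Local Notation W := (Wset n).

Lemma W_equivariant_eq (f g : V n -> V n) : W_equivariant f -> W_equivariant g ->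
  f 0 = g 0 -> f e1 = g e1 -> f e2 = g e2 -> f (e1 + e2) = g (e1 + e2) -> f =1 g.
Proof.
move=> fW gW f0 f1 f2 f12 x.
set p := coord x 1 *: e1 + coord x 2 *: e2.
have split_x : x = p + (x + p) by rewrite addrCA addvv addr0.
rewrite split_x (fW p) ?(gW p) ?Wset_proj //; congr (_ + _); rewrite /p.
by case: (F2_cases (coord x 1)) => ->; case: (F2_cases (coord x 2)) => ->;
  rewrite ?scale0r ?scale1r ?addr0 ?add0r.
Qed.

Lemma W_equivariant_involution (f : V n -> V n) (a c : V n) :
  W_equivariant f -> (forall x, f (f x) = x) -> f 0 = a -> f c + a + c \in W ->
  f (a + c) = f c + a.
Proof.
move=> fW f_inv f0 hw; have -> : a + c = f c + (f c + a + c).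
  by apply/rowP => j; rewrite !mxE; f2_decide.
by rewrite fW // f_inv; apply/rowP => j; rewrite !mxE; f2_decide.
Qed.

End EquivariantMaps.

Lemma mkpermE (T : finType) (f : T -> T) : injective f -> mkperm f =1 f.
Proof.
move=> f_inj x; have f_injb : injectiveb [ffun x => f x].
  by apply/injectiveP => a b; rewrite !ffunE; apply: f_inj.
by rewrite /mkperm -pvalE insubdK ?ffunE.
Qed.

Lemma mkperm_ext (T : finType) (f g : T -> T) : f =1 g -> mkperm f = mkperm g.
Proof. by move=> fg; rewrite /mkperm; congr insubd; apply/ffunP => x; rewrite !ffunE. Qed.

Lemma transl_E n (v x : V n) : transl v x = x + v.
Proof. by rewrite permE. Qed.

Lemma transl_sigmaW n (v : V n) : transl v \in sigmaW n -> v \in Wset n.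
Proof.
case/imsetP => w hw /(congr1 (fun g : {perm V n} => g 0)).
by rewrite !transl_E !add0r => ->.
Qed.

Section RegularGroups.
Variables (n : nat) (R : {group {perm V n}}).
Local Open Scope group_scope.

Lemma regular_card : regular R -> #|R| = #|V n|.
Proof.
case/andP => R_trans /forallP /(_ 0) /eqP R_stab.
by rewrite -(card_orbit_stab 'P R 0) R_stab cards1 muln1 (atransP R_trans) ?cardsT.
Qed.

Lemma transitive_regular :
  [transitive R, on [set: V n] | 'P] -> (#|R| <= #|V n|)%N -> regular R.
Proof.
move=> R_trans R_small; rewrite /regular R_trans; apply/forallP => x.
have := card_orbit_stab 'P R x; rewrite (atransP R_trans) ?inE // cardsT => orbit_stab.
have stab_le1 : (#|'C_R[x | 'P]| <= 1)%N.
  have V_pos : (0 < #|V n|)%N by apply/card_gt0P; exists 0.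
  by rewrite -(leq_pmul2l V_pos) muln1 orbit_stab.
by rewrite eq_sym eqEcard sub1G cards1 stab_le1.
Qed.

Lemma regular_eq (g h : {perm V n}) (x : V n) :
  regular R -> g \in R -> h \in R -> g x = h x -> g = h.
Proof.
case/andP => _ /forallP /(_ x) /eqP /trivgP /subsetP R_stab gR hR gh.
have /R_stab /set1P /eqP : g * h^-1 \in 'C_R[x | 'P].
  by rewrite inE groupM ?groupV //=; apply/astab1P; rewrite /= apermE permM gh -permM mulgV perm1.
by rewrite -eq_mulgV1 => /eqP.
Qed.

End RegularGroups.

Section TwistedTranslations.
Variable n : nat.
Local Notation e1 := (evec n 1).
Local Notation e2 := (evec n 2).
Local Notation W := (Wset n).

Definition twist (v x : V n) : 'F_2 :=
  coord v 1 * coord x 2 + coord v 2 * coord x 1 + coord v 1 * coord v 2.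
Definition ttr_fun (b v x : V n) : V n := x + v + twist v x *: b.
Definition ttr (b v : V n) : {perm V n} := mkperm (ttr_fun b v).

Variable b : V n.
Hypothesis hb : b \in W.

Lemma coord_addb (x : V n) (a : 'F_2) :
  coord (x + a *: b) 1 = coord x 1 /\ coord (x + a *: b) 2 = coord x 2.
Proof. by have /WsetP [b1 b2] := hb; rewrite !coordD !coordZ b1 b2 !mulr0 !addr0. Qed.

Lemma ttr_funM (u v x : V n) : ttr_fun b u (ttr_fun b v x) = ttr_fun b (v + u) x.
Proof.
have [c1 c2] := coord_addb (x + v) (twist v x).
rewrite /ttr_fun /twist c1 c2 !coordD.
by apply/rowP => j; rewrite !mxE; f2_decide.
Qed.

Lemma ttr_fun0 (x : V n) : ttr_fun b 0 x = x.
Proof. by rewrite /ttr_fun /twist !coord0 !mul0r !addr0 scale0r addr0. Qed.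

Lemma ttrE (v : V n) : ttr b v =1 ttr_fun b v.
Proof.
apply: mkpermE; apply: (can_inj (g := ttr_fun b v)) => x.
by rewrite ttr_funM addvv ttr_fun0.
Qed.

Lemma ttrM (u v : V n) : (ttr b u * ttr b v)%g = ttr b (u + v).
Proof. by apply/permP => x; rewrite permM !ttrE ttr_funM addrC. Qed.

Lemma ttr0 : ttr b 0 = 1%g.
Proof. by apply/permP => x; rewrite ttrE ttr_fun0 perm1. Qed.

Lemma ttrK (v x : V n) : ttr b v (ttr b v x) = x.
Proof. by rewrite -permM ttrM addvv ttr0 perm1. Qed.

Lemma ttr_at0 (v : V n) : ttr b v 0 = v + (coord v 1 * coord v 2) *: b.
Proof. by rewrite ttrE /ttr_fun /twist !coord0 !mulr0 !add0r. Qed.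

Lemma ttr_W_equivariant (v : V n) : W_equivariant (ttr b v).
Proof.
move=> x w /WsetP [w1 w2]; rewrite !ttrE /ttr_fun /twist !coordD w1 w2 !addr0.
by rewrite [x + w + v]addrAC [RHS]addrAC.
Qed.

Lemma ttr_Wset (w : V n) : w \in W -> ttr b w = transl w.
Proof.
case/WsetP => w1 w2; apply/permP => x.
by rewrite ttrE transl_E /ttr_fun /twist w1 w2 !mul0r !addr0 scale0r addr0.
Qed.

Hypothesis hn : (2 < n)%N.

Lemma pi_ttr : pi_ b = ttr b e1.
Proof.
apply: mkperm_ext => x; rewrite /ttr_fun /twist !coord_e //.
by rewrite mul0r mulr0 !addr0 mul1r addrAC.
Qed.

Lemma eps_ttr : eps_ b = ttr b e2.
Proof.
apply: mkperm_ext => x; rewrite /ttr_fun /twist !coord_e //.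
by rewrite !mul0r add0r addr0 mul1r addrAC.
Qed.

Lemma piE (x : V n) : pi_ b x = x + coord x 2 *: b + e1.
Proof. by rewrite pi_ttr ttrE /ttr_fun /twist !coord_e // mul1r mul0r mulr0 !addr0 addrAC. Qed.

Lemma epsE (x : V n) : eps_ b x = x + coord x 1 *: b + e2.
Proof. by rewrite eps_ttr ttrE /ttr_fun /twist !coord_e // !mul0r mul1r add0r !addr0 addrAC. Qed.

Lemma ttr_group_set : group_set [set ttr b v | v : V n].
Proof.
apply/group_setP; split; first by apply/imsetP; exists 0; rewrite ?ttr0.
by move=> _ _ /imsetP [u _ ->] /imsetP [v _ ->]; rewrite ttrM imset_f.
Qed.

Lemma Tb_image : T_ b = [set ttr b v | v : V n].
Proof.
apply/eqP; rewrite eqEsubset; apply/andP; split.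
  rewrite (gen_subG _ (Group ttr_group_set)) subUset; apply/andP; split.
    apply/subsetP => g; rewrite !inE => /orP [] /eqP ->; apply/imsetP.
      by exists e1; rewrite ?pi_ttr.
    by exists e2; rewrite ?eps_ttr.
  apply/subsetP => g /imsetP [j]; rewrite inE => hj ->; apply/imsetP.
  by exists (evec n j.+1); rewrite ?ttr_Wset ?evec_Wset.
apply/subsetP => g /imsetP [v _ ->].
rewrite (evec_decomp v) (big_morph (ttr b) (fun u w => esym (ttrM u w)) ttr0).
apply: group_prod => j _; case: (F2_cases (v 0 j)) => ->.
  by rewrite scale0r ttr0 group1.
rewrite scale1r; apply: mem_gen; rewrite !inE.
case: j => [[|[|j]] hj] /=; first by rewrite -pi_ttr eqxx.
  by rewrite -eps_ttr eqxx orbT.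
apply/orP; right; apply/imsetP; exists (Ordinal hj); rewrite ?inE //.
by rewrite ttr_Wset // (@evec_Wset _ (Ordinal hj)).
Qed.

Lemma Tb_elem (g : {perm V n}) : g \in T_ b -> exists v, g = ttr b v.
Proof. by rewrite Tb_image => /imsetP [v _ ->]; exists v. Qed.

Lemma ttr_in_Tb (v : V n) : ttr b v \in T_ b.
Proof. by rewrite Tb_image imset_f. Qed.

(* T_b is elementary abelian since (V, +) is. *)
Lemma Tb_abelem : (2.-abelem (T_ b))%g.
Proof.
apply/abelemP => //; split.
  apply/centsP => _ /Tb_elem [u ->] _ /Tb_elem [v ->].
  by rewrite /commute !ttrM addrC.
by move=> _ /Tb_elem [u ->]; rewrite expg2 ttrM addvv ttr0.
Qed.

(* tau_b(x + c b) with c = x1 x2 sends 0 to x. *)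
Lemma Tb_transitive : [transitive T_ b, on [set: V n] | 'P].
Proof.
apply/imsetP; exists 0 => //; apply/setP => x; rewrite inE; apply/esym/orbitP.
exists (ttr b (x + (coord x 1 * coord x 2) *: b)); first exact: ttr_in_Tb.
change (ttr b (x + (coord x 1 * coord x 2) *: b) 0 = x).
have [c1 c2] := coord_addb x (coord x 1 * coord x 2).
by rewrite ttr_at0 c1 c2 -addrA addvv addr0.
Qed.

(* T_b is transitive and an image of V, hence regular. *)
Lemma Tb_regular : regular (T_ b).
Proof.
apply: transitive_regular Tb_transitive _.
by have := leq_imset_card (ttr b) (V n); rewrite -Tb_image.
Qed.

Lemma ttr_sub0 (v x : V n) :
  ttr b v x + ttr b v 0 = x + (coord v 1 * coord x 2 + coord v 2 * coord x 1) *: b.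
Proof. by rewrite !ttrE /ttr_fun /twist !coord0; apply/rowP => j; rewrite !mxE; f2_decide. Qed.

Lemma Tb_meet_T : b != 0 -> Tgrp n :&: T_ b = sigmaW n.
Proof.
move=> b_neq0; apply/eqP; rewrite eqEsubset; apply/andP; split; last first.
  apply/subsetP => _ /imsetP [w hw ->].
  by rewrite inE imset_f //= -ttr_Wset ?ttr_in_Tb.
apply/subsetP => g; rewrite inE => /andP [/imsetP [u _ ->] /Tb_elem [v transl_ttr]].
have coef0 (x : V n) : (coord v 1 * coord x 2 + coord v 2 * coord x 1) *: b = 0.
  have := ttr_sub0 v x; rewrite -transl_ttr !transl_E add0r -addrA addvv.
  by move=> /(congr1 (+%R (- x))); rewrite !addKr.
have /eqP := coef0 e1; have /eqP := coef0 e2.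
rewrite !coord_e // !mulr0 !mulr1 add0r addr0 !scaler_eq0 (negbTE b_neq0) !orbF.
move=> /eqP v1 /eqP v2.
by rewrite transl_ttr ttr_Wset; [apply: imset_f|]; apply/WsetP.
Qed.

End TwistedTranslations.

Section Classification.
Variable n : nat.
Hypothesis hn : (2 < n)%N.
Local Notation e1 := (evec n 1).
Local Notation e2 := (evec n 2).
Local Notation W := (Wset n).

Variable R : {group {perm V n}}.
Hypotheses (R_abelem : (2.-abelem R)%g) (R_regular : regular R)
           (R_meet : Tgrp n :&: R = sigmaW n).

Lemma transl_in_R (w : V n) : w \in W -> transl w \in R.
Proof.
move=> hw; have : transl w \in sigmaW n by apply: imset_f.
by rewrite -R_meet => /setIP [].
Qed.

Lemma R_commute (g h : {perm V n}) (x : V n) : g \in R -> h \in R -> g (h x) = h (g x).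
Proof.
have [R_ab _] := abelemP (isT : prime 2) R_abelem.
by move=> gR hR; rewrite -!permM (centsP R_ab).
Qed.

Lemma R_involution (g : {perm V n}) (x : V n) : g \in R -> g (g x) = x.
Proof.
have [_ R_exp2] := abelemP (isT : prime 2) R_abelem.
by move=> gR; rewrite -permM -expg2 R_exp2 ?perm1.
Qed.

(* Elements of R commute with sigma_W <= R. *)
Lemma R_W_equivariant (g : {perm V n}) : g \in R -> W_equivariant g.
Proof. by move=> gR x w hw; rewrite -[_ + w]transl_E R_commute ?transl_in_R ?transl_E. Qed.

Lemma R_coset_fixed (g : {perm V n}) (x : V n) : g \in R -> g x + x \in W -> g 0 \in W.
Proof.
move=> gR hw; suff -> : g = transl (g x + x) by rewrite transl_E add0r.
apply: (regular_eq R_regular gR (transl_in_R hw) (x := x)).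
by rewrite transl_E addrCA addvv addr0.
Qed.

Lemma R_reach (v : V n) : exists2 g, g \in R & g 0 = v.
Proof.
case/andP: R_regular => R_trans _.
by case: (atransP2 R_trans (in_setT 0) (in_setT v)) => g gR ->; exists g.
Qed.

(* If r1, r2 in R send 0 to e1, e2, then y = e2 r1 lies in e1 + e2 + W: by
   regularity y avoids the cosets e2 + W, e1 + W and W. *)
Lemma R_twist_in_W (r1 r2 : {perm V n}) : r1 \in R -> r2 \in R ->
  r1 0 = e1 -> r2 0 = e2 -> r1 e2 + e1 + e2 \in W.
Proof.
move=> r1R r2R r10 r20; set y := r1 e2.
have r2e1 : r2 e1 + e1 = y + e1 by rewrite -r10 R_commute // r20.
have y_e2 : y + e2 \notin W.
  by apply: contra (e1_notin_W hn) => /(R_coset_fixed r1R); rewrite r10.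
have y_e1 : y + e1 \notin W.
  by rewrite -r2e1; apply: contra (e2_notin_W hn) => /(R_coset_fixed r2R); rewrite r20.
have y_0 : y \notin W.
  apply/negP => yW; have : r1 (e1 + y) = r1 e2.
    by rewrite R_W_equivariant // -{1}r10 R_involution // add0r.
  move/perm_inj/(congr1 (coord^~ 1%N)); case/WsetP: yW => y1 _.
  by rewrite coordD y1 !coord_e // addr0 => /eqP.
have := Wset_proj hn y; rewrite -/y.
case: (F2_cases (coord y 1)) => ->; case: (F2_cases (coord y 2)) => ->;
  rewrite ?scale0r ?scale1r ?addr0 ?add0r ?addrA // => yW.
- by rewrite yW in y_0.
- by rewrite yW in y_e2.
- by rewrite yW in y_e1.
Qed.

Lemma R_pi (r1 : {perm V n}) : r1 \in R -> r1 0 = e1 -> r1 e2 + e1 + e2 \in W ->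
  r1 = pi_ (r1 e2 + e1 + e2).
Proof.
move=> r1R r10 bW; set b := r1 e2 + e1 + e2.
have r1_inv x : r1 (r1 x) = x by apply: R_involution.
have pi_e2 : pi_ b e2 = r1 e2.
  by rewrite piE // !coord_e // scale1r /b; apply/rowP => j; rewrite !mxE; f2_decide.
have pi_inv x : pi_ b (pi_ b x) = x by rewrite pi_ttr // ttrK.
have piW : W_equivariant (pi_ b) by rewrite pi_ttr //; apply: ttr_W_equivariant.
have pi0 : pi_ b 0 = e1 by rewrite piE // coord0 scale0r !add0r.
apply/permP; apply: W_equivariant_eq; rewrite ?pi0 ?pi_e2 //.
- exact: R_W_equivariant.
- by rewrite -{1}r10 r1_inv -pi0 pi_inv.
rewrite (W_equivariant_involution (R_W_equivariant r1R) r1_inv r10 bW).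
by rewrite (W_equivariant_involution piW pi_inv pi0) pi_e2.
Qed.

Lemma R_eps (r2 : {perm V n}) : r2 \in R -> r2 0 = e2 -> r2 e1 + e1 + e2 \in W ->
  r2 = eps_ (r2 e1 + e1 + e2).
Proof.
move=> r2R r20 bW; set b := r2 e1 + e1 + e2.
have r2_inv x : r2 (r2 x) = x by apply: R_involution.
have bW_swap : r2 e1 + e2 + e1 \in W by rewrite addrAC.
have eps_e1 : eps_ b e1 = r2 e1.
  by rewrite epsE // !coord_e // scale1r /b; apply/rowP => j; rewrite !mxE; f2_decide.
have eps_inv x : eps_ b (eps_ b x) = x by rewrite eps_ttr // ttrK.
have epsW : W_equivariant (eps_ b) by rewrite eps_ttr //; apply: ttr_W_equivariant.
have eps0 : eps_ b 0 = e2 by rewrite epsE // coord0 scale0r !add0r.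
apply/permP; apply: W_equivariant_eq; rewrite ?eps0 ?eps_e1 //.
- exact: R_W_equivariant.
- by rewrite -{1}r20 r2_inv -eps0 eps_inv.
rewrite addrC (W_equivariant_involution (R_W_equivariant r2R) r2_inv r20 bW_swap).
by rewrite (W_equivariant_involution epsW eps_inv eps0) eps_e1.
Qed.

Lemma R_is_Tb : exists2 b, b \in W :\ 0 & R :=: T_ b.
Proof.
have [r1 r1R r10] := R_reach e1; have [r2 r2R r20] := R_reach e2.
set b := r1 e2 + e1 + e2.
have bW : b \in W := R_twist_in_W r1R r2R r10 r20.
have r2e1 : r2 e1 = r1 e2 by rewrite -r10 R_commute // r20.
have r1_pi : r1 = pi_ b := R_pi r1R r10 bW.
have r2_eps : r2 = eps_ b by rewrite /b -r2e1; apply: R_eps; rewrite ?r2e1.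
have b_neq0 : b != 0.
  apply: contra (e1_notin_W hn) => /eqP b0; apply: transl_sigmaW.
  have r1_transl : r1 = transl e1.
    by apply/permP => x; rewrite r1_pi piE // b0 scaler0 addr0 transl_E.
  by rewrite -R_meet inE imset_f //= -r1_transl.
exists b; first by rewrite in_setD1 b_neq0.
apply/eqP; rewrite eq_sym eqEcard (regular_card R_regular) (regular_card (Tb_regular _ _)) //.
rewrite leqnn andbT gen_subG subUset; apply/andP; split.
  by apply/subsetP => g; rewrite !inE => /orP [] /eqP ->; rewrite -?r1_pi -?r2_eps.
by apply/subsetP => g /imsetP [j]; rewrite inE => hj ->; apply/transl_in_R/evec_Wset.
Qed.

End Classification.

(* b |-> T_b is injective: pi_b and pi_c lie in the regular group T_c = T_b and
   agree at 0, hence coincide, and comparing their values at e2 gives b = c. *)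
Lemma Tb_inj n : (2 < n)%N -> {in Wset n :\ 0 &, injective (@T_ n)}.
Proof.
move=> hn b c; rewrite !in_setD1 => /andP [_ bW] /andP [_ cW] Tbc.
have pi_in_Tc (d : V n) : pi_ d \in T_ d by rewrite mem_gen // !inE eqxx.
have pi_bc : pi_ b = pi_ c.
  apply: (regular_eq (Tb_regular cW hn) (x := 0)); first by have := pi_in_Tc b; rewrite Tbc.
    exact: pi_in_Tc.
  by rewrite !piE // !coord0 !scale0r.
move/(congr1 (fun g : {perm V n} => g (evec n 2))): pi_bc.
by rewrite /= !piE // coord_e22 // !scale1r => /addIr /addrI.
Qed.

(* W is the set of vectors (0, 0, u) with u in F_2^(n-2). *)
Lemma card_Wset m : #|Wset m.+2| = (2 ^ m)%N.
Proof.
have -> : Wset m.+2 = [set row_mx (0 : 'rV['F_2]_2) u | u : 'rV['F_2]_m].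
  apply/setP => w; apply/WsetP/imsetP.
  - have c1 := coord_ord w (@ord0 m.+1); have c2 := coord_ord w (@Ordinal m.+2 1 isT).
    move: c1 c2 => /= c1 c2 [h1 h2]; exists (rsubmx (w : 'rV_(2 + m))) => //.
    suff hl : lsubmx (w : 'rV_(2 + m)) = 0 by rewrite -hl hsubmxK.
    apply/rowP => i; rewrite !mxE; case: i => [[|[|k]] hk] //.
    + by rewrite -h1 c1; congr (w 0 _); apply: val_inj.
    + by rewrite -h2 c2; congr (w 0 _); apply: val_inj.
  - case=> u _ ->.
    rewrite (coord_ord _ ord0) (coord_ord _ (@Ordinal m.+2 1 isT)).
    have -> : @ord0 m.+1 = lshift m (@ord0 1) by apply: val_inj.
    have -> : @Ordinal m.+2 1 isT = lshift m (@Ordinal 2 1 isT) by apply: val_inj.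
    by rewrite !(row_mxEl (0 : 'rV['F_2]_2) u) !mxE.
rewrite card_imset; last by move=> u v /(@eq_row_mx _ 1 2 m) [].
by rewrite cardT -cardE card_mx card_Fp // mul1n.
Qed.

Theorem mainTheorem8 (n : nat) (hn : (2 < n)%N) :
  (forall R : {group {perm V n}},
     [&& 2.-abelem R, regular R & Tgrp n :&: R == sigmaW n]%g <->
     exists2 b : V n, b \in Wset n :\ 0%R & R :=: T_ b)
  /\ {in Wset n :\ 0%R &, injective (@T_ n)}
  /\ #|[set T_ b | b in Wset n :\ 0%R]| = (2 ^ (n - 2) - 1)%N.
Proof.
split; [move=> R; split | split; first exact: Tb_inj].
- by case/and3P => R_abelem R_regular /eqP R_meet; apply: R_is_Tb.
- case=> b; rewrite in_setD1 => /andP [b_neq0 bW] ->.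
  by apply/and3P; split; [exact: Tb_abelem | exact: Tb_regular | apply/eqP; exact: Tb_meet_T].
rewrite card_in_imset; last exact: Tb_inj.
have := cardsD1 0 (Wset n); rewrite Wset0.
by case: n hn => [|[|m]] // _; rewrite card_Wset subn2 /= => ->; rewrite addnC addnK.
Qed.
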